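(* Let $\rho\geqslant\sqrt7$, and set $c=\frac14(\rho+\rho^{-1})^2$, $d=\frac12(\rho^2-4-\rho^{-2})$. For an integer $n$ define $$A_n=\rho^{2n}-nc-2n-n^2d-(n|n|-|n|)d,\quad B_n=\rho^{-2n}-nc+2n+n^2d-(n|n|-|n|)d,\quad C_n=1-nc-(n|n|-|n|)d,$$ and the Hermitian form $Q_n(\xi,\zeta)=A_n|\xi|^2+B_n|\zeta|^2+2C_n\operatorname{Re}(\xi\bar\zeta)$ on $\mathbb C^2$. Then for every integer $n\neq0,1$ and all $\xi,\zeta\in\mathbb C$, $Q_n(\xi,\zeta)>0$ unless $\xi=\zeta=0$. *)

(* C is an arbitrary numClosedFieldType (e.g. algC),
   a model of the complex numbers with real order. *)
From HB Require Import structures.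
From mathcomp Require Import all_boot all_order all_algebra.
Set Implicit Arguments. Unset Strict Implicit. Unset Printing Implicit Defensive.
Import Order.TTheory GRing.Theory Num.Theory.
Local Open Scope ring_scope.

Section Defs.
Variable C : numClosedFieldType.

Definition cst (rho : C) : C := (rho + rho^-1) ^+ 2 / 4%:R.
Definition dst (rho : C) : C := (rho ^+ 2 - 4%:R - rho ^- 2) / 2%:R.

Definition ecorr (rho : C) (n : int) : C :=
  (n * `|n| - `|n|)%:~R * dst rho.

Definition An (rho : C) (n : int) : C :=
  rho ^ (2 * n) - n%:~R * cst rho - 2%:R * n%:~R - n%:~R ^+ 2 * dst rho
  - ecorr rho n.
Definition Bn (rho : C) (n : int) : C :=
  rho ^ (- (2 * n)) - n%:~R * cst rho + 2%:R * n%:~R + n%:~R ^+ 2 * dst rho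
  - ecorr rho n.
Definition Cn (rho : C) (n : int) : C :=
  1 - n%:~R * cst rho - ecorr rho n.

Definition Qn (rho : C) (n : int) (xi zeta : C) : C :=
  An rho n * `|xi| ^+ 2 + Bn rho n * `|zeta| ^+ 2
  + 2%:R * Cn rho n * 'Re (xi * zeta^*).
End Defs.

From HB Require Import structures.
From mathcomp Require Import all_boot all_order all_algebra.
From mathcomp Require Import ring zify.
Import Order.TTheory GRing.Theory Num.Theory.
Local Open Scope ring_scope.

(* A Hermitian form A|xi|^2 + B|zeta|^2 + 2K Re(xi conj zeta) with real K is
   positive definite as soon as B > 0 and AB - K^2 > 0, by completing the
   square: B Q = |B zeta + K xi|^2 + (AB - K^2)|xi|^2.  So everything reduces
   to the signs of B_n and of the determinant A_n B_n - C_n^2.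

   Write r = rho^2 >= 7 and u = r^|n|.  The coefficients c and d are rational
   functions of r, and A_n, B_n, C_n are affine in u, u^-1 with coefficients
   polynomial in n, c, d.  For n = N >= 2 and for n = -M <= -1 the determinant
   splits as a sum of obviously nonnegative terms plus one term whose sign is
   an "exponential beats cubic" inequality:
     N >= 2 :  s + N(2 + N d)^2 < r^N s            with s = 2 + d - c,
     M >= 1 :  M(2 + M d)^2 + 2p < r^M (p + 2)     with p = c + d.
   The first one is proved by induction from N = 2, since N(2 + N d)^2 grows
   at most by a factor 27/8 <= r; the second follows from the first, except
   for M = 1.  What remains are a few inequalities between rational
   functions of r (the signs of d, s, p - 2, c, the base cases N = 2 and
   M = 1, and one comparison); this is where rho >= sqrt 7 is used.  Each is
   proved by exhibiting its cleared numerator as a polynomial in a = r - 7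
   with nonnegative coefficients. *)

(* Closes 0 <= e (resp. 0 < e) for e built with +, * and ^+ from numerals and
   hypotheses; in the strict case a positive numeral must occur in each sum. *)
Ltac nonneg := first [ assumption | exact: ler0n
  | apply: addr_ge0; nonneg | apply: mulr_ge0; nonneg | apply: exprn_ge0; nonneg ].
Ltac pos := first [ by rewrite ltr0n | assumption
  | apply: mulr_gt0; pos | apply: exprn_gt0; pos
  | apply: ltr_wpDr; [nonneg | pos] | apply: ltr_wpDl; [nonneg | pos] ].

Lemma lt_certificate (R : numDomainType) (k x y q : R) :
  0 < k -> k * (y - x) = q -> 0 < q -> x < y.
Proof. by move=> k_gt0 <-; rewrite pmulr_rgt0 // subr_gt0. Qed.

Lemma geometric_bound (R : numDomainType) (r K : R) (f : nat -> R) (N0 : nat) :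
  0 < r -> f N0 < r ^+ N0 * K -> (forall N, (N0 <= N)%N -> f N.+1 <= r * f N) ->
  forall N, (N0 <= N)%N -> f N < r ^+ N * K.
Proof.
move=> r_gt0 base step N /subnK <-; elim: (N - N0)%N => [//|k IH].
rewrite addSn exprS -mulrA; apply: le_lt_trans (step _ (leq_addl _ _)) _.
by rewrite ltr_pM2l.
Qed.

Definition cubic {R : pzRingType} (d : R) (N : nat) : R := N%:R * (2 + N%:R * d) ^+ 2.

(* For N >= 2 the cubic grows by a factor at most (3/2)^3 = 27/8 <= 4. *)
Lemma cubic_succ_le (R : numDomainType) (r d : R) (N : nat) :
  4 <= r -> 0 <= d -> (2 <= N)%N -> cubic d N.+1 <= r * cubic d N.
Proof.
move=> r_ge4 d_ge0 N_ge2.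
have ratioN : 2 * N.+1%:R <= 3 * N%:R :> R by rewrite -!natrM ler_nat; lia.
have ratio_lin : 2 * (2 + N.+1%:R * d) <= 3 * (2 + N%:R * d).
  rewrite mulrDr [3 * _]mulrDr !mulrA; apply: lerD; first by rewrite -!natrM ler_nat.
  exact: ler_wpM2r.
have ratio_cubic : 8 * cubic d N.+1 <= 27 * cubic d N.
  have -> : 8 = 2 * 2 ^+ 2 :> R by rewrite -natrX -natrM.
  have -> : 27 = 3 * 3 ^+ 2 :> R by rewrite -natrX -natrM.
  rewrite /cubic mulrACA -exprMn [X in _ <= X]mulrACA -exprMn.
  apply: ler_pM; [nonneg | nonneg | exact: ratioN |].
  by rewrite !expr2; apply: ler_pM => //; nonneg.
have cubic_ge0 : 0 <= cubic d N by rewrite /cubic; nonneg.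
rewrite -(@ler_pM2l _ 8) ?ltr0n // (le_trans ratio_cubic) // mulrA.
apply: ler_wpM2r => //; apply: le_trans (_ : 8 * 4 <= 8 * r).
  by rewrite -natrM ler_nat.
by rewrite ler_pM2l ?ltr0n.
Qed.

(* The constants c and d as functions of r = rho^2. *)
Definition c_of {F : fieldType} (r : F) : F := (r + 2 + r^-1) / 4.
Definition d_of {F : fieldType} (r : F) : F := (r - 4 - r^-1) / 2.

Section GrowthBounds.
Context {R : numFieldType} {r : R}.
Hypothesis r_ge7 : 7 <= r.
Local Notation c := (c_of r).
Local Notation d := (d_of r).

Let r_shift : exists2 a, 0 <= a & r = a + 7.
Proof. by exists (r - 7); rewrite ?subr_ge0 ?subrK. Qed.
Let r_gt0 : 0 < r. Proof. by apply: lt_le_trans r_ge7; rewrite ltr0n. Qed.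
Let r_ge1 : 1 <= r. Proof. by apply: le_trans r_ge7; rewrite ler1n. Qed.

(* After substituting r = a + 7, a certificate k, q (polynomials in a) proves
   an inequality between rational functions of r. *)
Local Ltac certify k q :=
  apply: (@lt_certificate _ k _ _ q);
  [pos | rewrite /c_of /d_of /cubic; field; apply: lt0r_neq0; pos | pos].

Lemma c_of_ge0 : 0 <= c.
Proof.
apply: ltW; have [a a_ge0 ->] := r_shift.
certify (4 * (a + 7)) (64 + a * (16 + a)).
Qed.

Lemma d_of_ge0 : 0 <= d.
Proof.
apply: ltW; have [a a_ge0 ->] := r_shift.
certify (2 * (a + 7)) (20 + a * (10 + a)).
Qed.

Lemma s_gt0 : 0 < 2 + d - c.
Proof.
have [a a_ge0 ->] := r_shift.
certify (4 * (a + 7)) (32 + a * (12 + a)).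
Qed.

Lemma p_ge2 : 2 <= c + d.
Proof.
apply: ltW; have [a a_ge0 ->] := r_shift.
certify (4 * (a + 7)) (48 + a * (28 + 3 * a)).
Qed.

Lemma pos_growth_base : (2 + d - c) + cubic d 2 < r ^+ 2 * (2 + d - c).
Proof.
have [a a_ge0 ->] := r_shift.
certify (4 * (a + 7) ^+ 2) (1504 + a * (2176 + a * (1064 + a * (238 + a * (25 + a))))).
Qed.

Lemma neg_growth_base : cubic d 1 + 2 * (c + d) < r * (c + d + 2).
Proof.
have [a a_ge0 ->] := r_shift.
certify (4 * (a + 7) ^+ 2) (4080 + a * (2340 + a * (517 + a * (52 + 2 * a)))).
Qed.

(* Lets the negative-index inequality be deduced from the positive one. *)
Lemma cross_bound : 3 * c + d - 2 <= 2 * c * r.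
Proof.
apply: ltW; have [a a_ge0 ->] := r_shift.
certify (4 * (a + 7)) (720 + a * (292 + a * (41 + 2 * a))).
Qed.

Lemma pos_growth N : (2 <= N)%N -> (2 + d - c) + cubic d N < r ^+ N * (2 + d - c).
Proof.
apply: (@geometric_bound _ r _ (fun N => (2 + d - c) + cubic d N) 2 r_gt0 pos_growth_base).
move=> M M_ge2; rewrite mulrDr; apply: lerD; first exact: ler_peMl (ltW s_gt0) r_ge1.
by apply: cubic_succ_le M_ge2; [apply: le_trans r_ge7; rewrite ler_nat | exact: d_of_ge0].
Qed.

Lemma neg_growth M : (1 <= M)%N -> cubic d M + 2 * (c + d) < r ^+ M * (c + d + 2).
Proof.
case: M => [//|[_|M _]]; first by rewrite expr1; exact: neg_growth_base.
have rM_ge_r : r <= r ^+ M.+2.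
  by rewrite exprS; apply: ler_peMr; [exact: ltW | exact: exprn_ege1].
have split_slack : r ^+ M.+2 * (c + d + 2) - (cubic d M.+2 + 2 * (c + d))
    = (r ^+ M.+2 * (2 + d - c) - ((2 + d - c) + cubic d M.+2))
      + (2 * c * r ^+ M.+2 - (3 * c + d - 2)) by ring.
rewrite -subr_gt0 split_slack; apply: ltr_wpDr; last by rewrite subr_gt0 pos_growth.
rewrite subr_ge0; apply: le_trans cross_bound _.
by apply: ler_wpM2l rM_ge_r; rewrite mulr_ge0 ?ler0n ?c_of_ge0.
Qed.
End GrowthBounds.

Section ClosedForms.
Context {C : numClosedFieldType} {rho : C}.
Local Notation r := (rho ^+ 2).
Local Notation c := (cst rho).
Local Notation d := (dst rho).

Lemma cst_of : rho != 0 -> c = c_of r.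
Proof. by move=> rho_neq0; rewrite /cst /c_of; field. Qed.
Lemma dst_of : rho != 0 -> d = d_of r.
Proof. by move=> rho_neq0; rewrite /dst /d_of; field. Qed.

Lemma An_nat (N : nat) : An rho N = r ^+ N - N%:R * (c + 2 + (2 * N%:R - 1) * d).
Proof. rewrite /An /ecorr -PoszM -exprnP exprM intrB intrM; ring. Qed.
Lemma Bn_nat (N : nat) : Bn rho N = (r ^+ N)^-1 + N%:R * (2 + d - c).
Proof. rewrite /Bn /ecorr -PoszM -exprnN exprM intrB intrM; ring. Qed.
Lemma Cn_nat (N : nat) : Cn rho N = 1 - N%:R * (c + (N%:R - 1) * d).
Proof. rewrite /Cn /ecorr intrB intrM; ring. Qed.

Lemma An_neg (M : nat) : An rho (- M%:Z) = (r ^+ M)^-1 + M%:R * (c + d + 2).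
Proof. rewrite /An /ecorr mulrN -PoszM -exprnN exprM normrN intrB intrM intrN; ring. Qed.
Lemma Bn_neg (M : nat) :
  Bn rho (- M%:Z) = r ^+ M + M%:R * (c + d - 2) + 2 * M%:R ^+ 2 * d.
Proof.
rewrite /Bn /ecorr mulrN opprK -PoszM -exprnP exprM normrN intrB intrM intrN; ring.
Qed.
Lemma Cn_neg (M : nat) : Cn rho (- M%:Z) = 1 + M%:R * (c + (M%:R + 1) * d).
Proof. rewrite /Cn /ecorr normrN intrB intrM intrN; ring. Qed.
End ClosedForms.

Lemma det_nat_decomposition (F : fieldType) (c d u : F) (N : nat) : u != 0 ->
  (u - N%:R * (c + 2 + (2 * N%:R - 1) * d)) * (u^-1 + N%:R * (2 + d - c))
    - (1 - N%:R * (c + (N%:R - 1) * d)) ^+ 2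
  = N%:R * (u * (2 + d - c) - ((2 + d - c) + cubic d N))
    + N%:R * (c + 2 + (2 * N%:R - 1) * d) * (1 - u^-1).
Proof. by move=> u_neq0; rewrite /cubic; field. Qed.

(* The determinant A B - C^2 for n = -M: a growth term plus two terms that
   are nonnegative when p = c + d >= 2 and d >= 0. *)
Lemma det_neg_decomposition (F : fieldType) (c d u : F) (M : nat) : u != 0 ->
  (u^-1 + M%:R * (c + d + 2)) * (u + M%:R * (c + d - 2) + 2 * M%:R ^+ 2 * d)
    - (1 + M%:R * (c + (M%:R + 1) * d)) ^+ 2
  = u^-1 * (M%:R * (c + d - 2) + 2 * M%:R ^+ 2 * d)
    + M%:R * (u * (c + d + 2) - (cubic d M + 2 * (c + d)))
    + 2 * M%:R ^+ 2 * (4 * M%:R - 1) * d.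
Proof. by move=> u_neq0; rewrite /cubic; field. Qed.

Lemma hermitian_form_pos (C : numClosedFieldType) (A B K xi zeta : C) :
  0 < B -> 0 < A * B - K ^+ 2 -> K \is Num.real -> ~ (xi = 0 /\ zeta = 0) ->
  0 < A * `|xi| ^+ 2 + B * `|zeta| ^+ 2 + 2 * K * 'Re (xi * zeta^*).
Proof.
move=> B_gt0 D_gt0 K_real xi_zeta_neq0.
have B_real : B \is Num.real := gtr0_real B_gt0.
have complete_square : B * (A * `|xi| ^+ 2 + B * `|zeta| ^+ 2 + 2 * K * 'Re (xi * zeta^*))
    = `|B * zeta + K * xi| ^+ 2 + (A * B - K ^+ 2) * `|xi| ^+ 2.
  rewrite !normCK ReE !(rmorphD, rmorphM) /= conjCK (conj_Creal B_real) (conj_Creal K_real).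
  by field.
rewrite -(pmulr_rgt0 _ B_gt0) complete_square.
have [xi0 | xi_neq0] := eqVneq xi 0.
  have zeta_neq0 : zeta != 0 by apply/eqP => zeta0; exact: xi_zeta_neq0.
  rewrite xi0 normr0 expr0n mulr0 mulr0 !addr0 exprn_gt0 // normr_gt0.
  by rewrite mulf_neq0 // gt_eqF.
by apply: ltr_wpDl; rewrite ?exprn_ge0 // mulr_gt0 // exprn_gt0 // normr_gt0.
Qed.

Section QnCoefficients.
Context {C : numClosedFieldType} {rho : C}.
Hypotheses (rho_gt0 : 0 < rho) (r_ge7 : 7 <= rho ^+ 2).
Local Notation r := (rho ^+ 2).

Let rho_neq0 : rho != 0. Proof. exact: lt0r_neq0. Qed.
Let r_ge1 : 1 <= r. Proof. by apply: le_trans r_ge7; rewrite ler1n. Qed.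
Let c_ge0 : 0 <= c_of r. Proof. exact: c_of_ge0. Qed.
Let d_ge0 : 0 <= d_of r. Proof. exact: d_of_ge0. Qed.

Lemma Cn_real n : Cn rho n \is Num.real.
Proof.
rewrite /Cn /ecorr (cst_of rho_neq0) (dst_of rho_neq0).
by apply: rpredB; [apply: rpredB; first exact: rpred1|];
  apply: rpredM; rewrite ?realz ?ger0_real.
Qed.

Lemma Qn_coeffs_nat N : (2 <= N)%N ->
  0 < Bn rho N /\ 0 < An rho N * Bn rho N - Cn rho N ^+ 2.
Proof.
move=> N_ge2; have N_gt0 : 0 < N%:R :> C by rewrite ltr0n; case: N N_ge2.
have u_ge1 : 1 <= r ^+ N := exprn_ege1 N r_ge1.
have u_gt0 : 0 < r ^+ N := lt_le_trans ltr01 u_ge1.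
rewrite An_nat Bn_nat Cn_nat (cst_of rho_neq0) (dst_of rho_neq0).
rewrite det_nat_decomposition ?lt0r_neq0 //; split.
  by rewrite addr_gt0 ?invr_gt0 // mulr_gt0 ?s_gt0.
apply: ltr_wpDr; last by rewrite mulr_gt0 // subr_gt0 pos_growth.
have twoN_ge1 : 0 <= 2 * N%:R - 1 :> C.
  by rewrite subr_ge0 -natrM ler1n muln_gt0; case: N N_ge2 {N_gt0 u_ge1 u_gt0}.
have inv_le1 : 0 <= 1 - (r ^+ N)^-1 by rewrite subr_ge0 invf_le1.
nonneg.
Qed.

Lemma Qn_coeffs_neg M : (1 <= M)%N ->
  0 < Bn rho (- M%:Z) /\ 0 < An rho (- M%:Z) * Bn rho (- M%:Z) - Cn rho (- M%:Z) ^+ 2.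
Proof.
move=> M_ge1; have u_gt0 : 0 < r ^+ M by rewrite exprn_gt0 // (lt_le_trans ltr01).
rewrite An_neg Bn_neg Cn_neg (cst_of rho_neq0) (dst_of rho_neq0).
rewrite det_neg_decomposition ?lt0r_neq0 //.
have p2_ge0 : 0 <= c_of r + d_of r - 2 by rewrite subr_ge0 p_ge2.
have fourM_ge1 : 0 <= 4 * M%:R - 1 :> C by rewrite subr_ge0 -natrM ler1n muln_gt0.
have Y_ge0 : 0 <= M%:R * (c_of r + d_of r - 2) + 2 * M%:R ^+ 2 * d_of r by nonneg.
split; first by rewrite -addrA ltr_wpDr.
apply: ltr_wpDr; first by nonneg.
apply: ltr_wpDl; first by rewrite mulr_ge0 // invr_ge0 ltW.
by rewrite mulr_gt0 ?ltr0n // subr_gt0 neg_growth.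
Qed.
End QnCoefficients.

Theorem lemma5p2 (C : numClosedFieldType) (rho : C) (hrho : sqrtC 7%:R <= rho)
  (n : int) (hn0 : n != 0) (hn1 : n != 1) (xi zeta : C)
  (hnz : ~ (xi = 0 /\ zeta = 0)) :
  0 < Qn rho n xi zeta.
Proof.
have sqrt7_ge0 : 0 <= sqrtC 7%:R :> C by rewrite sqrtC_ge0 ler0n.
have rho_gt0 : 0 < rho by apply: lt_le_trans hrho; rewrite sqrtC_gt0 ltr0n.
have r_ge7 : 7 <= rho ^+ 2 by rewrite -(sqrtCK 7) !expr2 ler_pM.
have [B_gt0 det_gt0] : 0 < Bn rho n /\ 0 < An rho n * Bn rho n - Cn rho n ^+ 2.
  case: n hn0 hn1 => [[|[|N]] // _ _ | M _ _]; first exact: Qn_coeffs_nat.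
  by rewrite NegzE; apply: Qn_coeffs_neg.
exact: hermitian_form_pos B_gt0 det_gt0 (Cn_real rho_gt0 r_ge7 n) hnz.
Qed.
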